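(* There exists a three-point set $X\subset \mathbb{S}^1$ that is not a spherical suborbit of any finite group action: there is no finite group $G$, no $n\ge 2$ and no orthogonal linear action of $G$ on $\mathbb{R}^n$ (with $\mathbb{R}^2\subset\mathbb{R}^n$ included as the first two coordinates, so $\mathbb{S}^1\subset\mathbb{S}^{n-1}$) such that $X$ is contained in a single $G$-orbit.
   Context: $\mathbb{S}^{m-1}$ denotes the unit sphere in $\mathbb{R}^m$. A set $X\subset\mathbb{S}^{k-1}$ is a spherical suborbit of a group $G$ if $X$ is contained in an orbit of $G$ with respect to some orthogonal action of $G$ on a sphere $\mathbb{S}^{n-1}$ ($n\ge k$) containing $\mathbb{S}^{k-1}$ isometrically in the standard way. *)

From HB Require Import structures.
From mathcomp Require Import all_boot all_order all_algebra all_fingroup.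
From mathcomp Require Import Rstruct.
From Stdlib Require Import Reals.
Set Implicit Arguments. Unset Strict Implicit. Unset Printing Implicit Defensive.
Import GRing.Theory Num.Theory.
Local Open Scope ring_scope.

Definition orthogonal_mx (n : nat) (A : 'M[R]_n) : Prop := A *m A^T = 1%:M.

Definition on_S1 (p : R * R) : Prop := p.1 ^+ 2 + p.2 ^+ 2 = 1.

Definition embed2 (n : nat) (p : R * R) : 'cV[R]_n :=
  \col_(i < n) (if val i == 0%N then p.1 else if val i == 1%N then p.2 else 0).

Definition orth_action (gT : finGroupType) (G : {group gT}) (n : nat)
    (rho : gT -> 'M[R]_n) : Prop :=
  (forall g, g \in G -> orthogonal_mx (rho g)) /\
  (forall g h, g \in G -> h \in G -> rho (g * h)%g = rho g *m rho h).

Definition in_one_orbit (gT : finGroupType) (G : {group gT}) (n : nat)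
    (rho : gT -> 'M[R]_n) (X : seq (R * R)) : Prop :=
  exists v : 'cV[R]_n, forall p, p \in X -> exists2 g, g \in G & rho g *m v = embed2 n p.

(* The three points p1 = (1, 0), p2 = (1/8, s), p3 = (3/4, 2s/3) with s = sqrt (63/64)
   satisfy 2 p1 + 2 p2 - 3 p3 = 0.  If rho g v = p1, rho h v = p2, rho k v = p3, then the
   function W x := (rho x v)_0 on G satisfies 2 W (x g) + 2 W (x h) - 3 W (x k) = 0 for
   every x, i.e. W is killed by the group-ring element 2 g + 2 h - 3 k acting by right
   translations.  The matrix of this operator is an integer matrix congruent mod 2 to a
   permutation matrix, so its determinant is odd, hence nonzero: W = 0, contradicting
   W k = 3/4. *)
From HB Require Import structures.
From mathcomp Require Import all_boot all_order all_algebra all_fingroup.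
From mathcomp Require Import Rstruct.
From Stdlib Require Import Reals.
From mathcomp Require Import ring lra.
Set Implicit Arguments. Unset Strict Implicit. Unset Printing Implicit Defensive.
Import GRing.Theory Num.Theory.
Local Open Scope ring_scope.

Lemma intr_Z2 (a : int) : (a%:~R : 'Z_2) = (modz a 2)%:~R.
Proof.
rewrite {1}(divz_eq a 2) rmorphD rmorphM /=.
have -> : (Posz 2)%:~R = 0 :> 'Z_2 by apply/eqP.
by rewrite mulr0 add0r.
Qed.

Section RightTranslation.
Variable gT : finGroupType.
Local Notation N := #|gT|.

Lemma rmul_rank_inj (g : gT) : injective (fun i : 'I_N => enum_rank (enum_val i * g)%g).
Proof. by move=> i j /(congr1 enum_val); rewrite !enum_rankK => /mulIg /enum_val_inj. Qed.

Definition rmul_perm (g : gT) : 'S_N := perm (@rmul_rank_inj g).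

Definition fun_col (F : Type) (W : gT -> F) : 'cV[F]_N := \col_i W (enum_val i).

Lemma rmul_perm_mx_col (F : pzRingType) (g : gT) (W : gT -> F) :
  perm_mx (rmul_perm g) *m fun_col W = fun_col (fun x => W (x * g)%g).
Proof. by apply/matrixP => i j; rewrite -row_permE !mxE permE enum_rankK. Qed.

Definition rmul_comb_mx (F : pzRingType) (a b c : int) (g h k : gT) : 'M[F]_N :=
  a%:~R *: perm_mx (rmul_perm g) + b%:~R *: perm_mx (rmul_perm h)
  + c%:~R *: perm_mx (rmul_perm k).

Lemma map_rmul_comb_mx (F K : pzRingType) (f : {rmorphism F -> K}) a b c g h k :
  map_mx f (rmul_comb_mx F a b c g h k) = rmul_comb_mx K a b c g h k.
Proof. by rewrite !map_mxD !map_mxZ !map_perm_mx !rmorph_int. Qed.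

Lemma rmul_comb_mxE (F : pzRingType) a b c g h k (W : gT -> F) i :
  (rmul_comb_mx F a b c g h k *m fun_col W) i 0
  = a%:~R * W (enum_val i * g)%g + b%:~R * W (enum_val i * h)%g
    + c%:~R * W (enum_val i * k)%g.
Proof. by rewrite !mulmxDl -!scalemxAl !rmul_perm_mx_col !mxE. Qed.

Section OddCombination.
Variables (a b c : int) (g h k : gT).
Hypotheses (a_even : modz a 2 = 0) (b_even : modz b 2 = 0) (c_odd : modz c 2 = 1).

Lemma rmul_comb_mx_Z2 : rmul_comb_mx 'Z_2 a b c g h k = perm_mx (rmul_perm k).
Proof.
rewrite /rmul_comb_mx (intr_Z2 a) (intr_Z2 b) (intr_Z2 c) a_even b_even c_odd.
by rewrite !scale0r !add0r scale1r.
Qed.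

Lemma det_rmul_comb_mx_neq0 : \det (rmul_comb_mx int a b c g h k) != 0.
Proof.
apply: contraTneq isT => det0.
have := det_map_mx (intr : int -> 'Z_2) (rmul_comb_mx int a b c g h k).
by rewrite det0 rmorph0 map_rmul_comb_mx rmul_comb_mx_Z2 det_perm; case: odd_perm.
Qed.

Lemma rmul_comb_eq0 (F : numFieldType) (W : gT -> F) :
  (forall x, a%:~R * W (x * g)%g + b%:~R * W (x * h)%g + c%:~R * W (x * k)%g = 0) ->
  forall x, W x = 0.
Proof.
move=> Wkilled x.
have unit_comb : rmul_comb_mx F a b c g h k \in unitmx.
  rewrite unitmxE unitfE -(map_rmul_comb_mx (intr : int -> F)) det_map_mx.
  by rewrite intr_eq0 det_rmul_comb_mx_neq0.
have comb_W : rmul_comb_mx F a b c g h k *m fun_col W = 0.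
  by apply/matrixP => i j; rewrite ord1 rmul_comb_mxE Wkilled mxE.
have /matrixP/(_ (enum_rank x) 0) : fun_col W = 0.
  by rewrite -(mulKmx unit_comb (fun_col W)) comb_W mulmx0.
by rewrite !mxE enum_rankK.
Qed.

End OddCombination.
End RightTranslation.

Definition s63 : R := Num.sqrt (63 / 64).
Definition p1 : R * R := (1, 0).
Definition p2 : R * R := (1 / 8, s63).
Definition p3 : R * R := (3 / 4, 2 / 3 * s63).

Lemma s63_sqr : s63 ^+ 2 = 63 / 64.
Proof. by rewrite sqr_sqrtr //; lra. Qed.

Lemma p123_on_S1 : [/\ on_S1 p1, on_S1 p2 & on_S1 p3].
Proof.
rewrite /on_S1 /= [(2 / 3 * _) ^+ 2]exprMn s63_sqr.
by split; lra.
Qed.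

Lemma p123_uniq : uniq [:: p1; p2; p3].
Proof.
rewrite /= !inE !negb_or !xpair_eqE andbT -andbA.
by apply/and3P; split; apply/negP => /andP [/eqP ? _]; lra.
Qed.

Lemma embed2_fst n (p : R * R) (i : 'I_n) : val i = 0%N -> embed2 n p i 0 = p.1.
Proof. by rewrite mxE => ->. Qed.

Lemma p3_fst_neq0 : p3.1 != 0.
Proof. by rewrite /p3 /=; apply/eqP; lra. Qed.

Lemma p123_relation n :
  2 *: embed2 n p1 + 2 *: embed2 n p2 + (-3) *: embed2 n p3 = 0.
Proof. by apply/matrixP => i j; rewrite !mxE /=; do 2?case: eqP => _ /=; lra. Qed.

Theorem theorem2 :
  exists p1 p2 p3 : R * R,
    [/\ on_S1 p1, on_S1 p2, on_S1 p3 & uniq [:: p1; p2; p3]] /\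
    forall (gT : finGroupType) (G : {group gT}) (n : nat) (rho : gT -> 'M[R]_n),
      leq 2 n -> orth_action G rho -> ~ in_one_orbit G rho [:: p1; p2; p3].
Proof.
exists p1, p2, p3; split.
  by have [? ? ?] := p123_on_S1; split=> //; apply: p123_uniq.
move=> gT G n rho n_ge2 [_ rhoM] [v orbit_v].
have [g Gg rho_g] := orbit_v p1 (mem_head _ _).
have /orbit_v[h Gh rho_h] : p2 \in [:: p1; p2; p3] by rewrite !inE eqxx orbT.
have /orbit_v[k Gk rho_k] : p3 \in [:: p1; p2; p3] by rewrite !inE eqxx !orbT.
pose i0 : 'I_n := Ordinal (ltnW n_ge2).
(* Extending by 0 off G keeps the relation below valid for every x in gT. *)
pose W x := if x \in G then (rho x *m v) i0 0 else 0.
have W_killed x : 2%:~R * W (x * g)%g + 2%:~R * W (x * h)%g + (-3)%:~R * W (x * k)%g = 0.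
  rewrite /W !groupMr //; case: ifP => Gx; last by rewrite !mulr0 !addr0.
  rewrite !rhoM // -!mulmxA rho_g rho_h rho_k.
  have := congr1 (fun M => (rho x *m M) i0 0) (p123_relation n).
  by rewrite /= mulmx0 !mulmxDr -!scalemxAr !mxE.
have := @rmul_comb_eq0 gT 2 2 (-3) g h k (erefl _) (erefl _) (erefl _) _ W W_killed k.
by rewrite /W Gk rho_k embed2_fst //; apply/eqP; exact: p3_fst_neq0.
Qed.
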